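(* For any subset $L\subset G$ we have $L^\#=L^{\#\#}+L^\bullet$ as ideals of $\kappa G^\#$.
   Context: Let $\kappa$ be a field of characteristic $0$. For a group $G$, let $*:\kappa G\to\kappa G$ be the $\kappa$-linear map with $g^*=g^{-1}$ for $g\in G$, and $(\kappa G)^*$ its fixed points. $A_G$ is the quotient of $\kappa G$ by the two-sided ideal generated by all $ab-ba$ with $a\in\kappa G$, $b\in(\kappa G)^*$; $*$ descends to $A_G$, and $\kappa G^\#=\{x\in A_G:x^*=x\}$ (a commutative subring of the centre of $A_G$). Group elements are identified with their images in $A_G$, and $\bar x=\tfrac12(x+x^* )$ for $x\in A_G$. For $L\subset G$: $L^\#$ is the ideal of $\kappa G^\#$ generated by $\{\overline{xl}-\bar x: x\in A_G, l\in L\}$; $L^{\#\#}$ is the ideal generated by $\{\overline{xl}-\overline{xl^{-1}}: x\in A_G, l\in L\}$; $L^\bullet$ is the ideal generated by $\{1-\bar l: l\in L\}$. *)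

(* Group algebra kappa G of an arbitrary (possibly infinite)
   group G, modelled by formal finite sums (lists of pairs (coefficient, group
   element)) up to equality of coefficient functions; the algebra A_G is
   modelled by the same representatives up to congruence modulo the two-sided
   ideal I_G generated by the commutators [a,b], b = star b. *)
From HB Require Import structures.
From mathcomp Require Import all_boot all_algebra.

Set Implicit Arguments.
Unset Strict Implicit.
Unset Printing Implicit Defensive.

Import GRing.Theory.
Local Open Scope ring_scope.

Section GroupAlgebra.
Variables (K : fieldType) (G : groupType).

Definition kG := seq (K * G).

Definition coef (x : kG) (g : G) : K := \sum_(p <- x | p.2 == g) p.1.

Definition kG_eq (x y : kG) : Prop := forall g, coef x g = coef y g.

Definition kG0 : kG := [::].
Definition kG_add (x y : kG) : kG := x ++ y.
Definition kG_scale (c : K) (x : kG) : kG := [seq (c * p.1, p.2) | p <- x].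
Definition kG_sub (x y : kG) : kG := kG_add x (kG_scale (-1) y).
Definition kG_mul (x y : kG) : kG :=
  [seq (p.1 * q.1, monoid.mul p.2 q.2) | p <- x, q <- y].
Definition kG_of (g : G) : kG := [:: (1, g)].
Definition kG_star (x : kG) : kG := [seq (p.1, monoid.inv p.2) | p <- x].

Definition kG_selfadj (b : kG) : Prop := kG_eq (kG_star b) b.

Inductive inI : kG -> Prop :=
  | inI_gen a b c d : kG_selfadj b ->
      inI (kG_mul c (kG_mul (kG_sub (kG_mul a b) (kG_mul b a)) d))
  | inI_zero : inI kG0
  | inI_add x y : inI x -> inI y -> inI (kG_add x y)
  | inI_eq x y : kG_eq x y -> inI x -> inI y.

Definition AG_eq (x y : kG) : Prop := inI (kG_sub x y).

(* x (as an element of A_G) lies in kappa G^# *)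
Definition sharp (x : kG) : Prop := AG_eq (kG_star x) x.

Definition bar (x : kG) : kG := kG_scale (2%:R)^-1 (kG_add x (kG_star x)).

(* the ideal of the commutative ring kappa G^# generated by a set S of elements
   of kappa G^#, as a set of elements of A_G (closed under equality in A_G) *)
Inductive inIdeal (S : kG -> Prop) : kG -> Prop :=
  | inIdeal_zero : inIdeal S kG0
  | inIdeal_gen r s : sharp r -> S s -> inIdeal S (kG_mul r s)
  | inIdeal_add x y : inIdeal S x -> inIdeal S y -> inIdeal S (kG_add x y)
  | inIdeal_eq x y : AG_eq x y -> inIdeal S x -> inIdeal S y.

Definition inIdealSum (I J : kG -> Prop) (y : kG) : Prop :=
  exists a b, I a /\ J b /\ AG_eq y (kG_add a b).

Variable L : G -> Prop.

Definition gen_sharp (y : kG) : Prop :=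
  exists x l, L l /\ y = kG_sub (bar (kG_mul x (kG_of l))) (bar x).
Definition gen_sharpsharp (y : kG) : Prop :=
  exists x l, L l /\
    y = kG_sub (bar (kG_mul x (kG_of l))) (bar (kG_mul x (kG_of (monoid.inv l)))).
Definition gen_bullet (y : kG) : Prop :=
  exists l, L l /\ y = kG_sub (kG_of monoid.one) (bar (kG_of l)).

Definition Lsharp := inIdeal gen_sharp.
Definition Lsharpsharp := inIdeal gen_sharpsharp.
Definition Lbullet := inIdeal gen_bullet.

End GroupAlgebra.

From Pilot Require Import Defs.
From HB Require Import structures.
From mathcomp Require Import all_boot all_algebra.
From mathcomp Require Import ring.

(* The whole argument rests on three identities between generators, valid
   for x in κG and l in G (with 1/2 ∈ κ):
   (a)  bar(xl) - bar(xl⁻¹) = (bar(xl) - bar x) + (bar((xl⁻¹)l) - bar(xl⁻¹)),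
   (b)  1 - bar l = -(bar(1·l) - bar 1),
   (c)  bar(xl) - bar x = ½ (bar(xl) - bar(xl⁻¹)) - bar x · (1 - bar l)
        in A_G; the difference of the two sides is ¼ (m x* - x* m) with the
        self-adjoint m = l + l⁻¹, hence lies in the defining ideal of A_G.
   By (a) and (b) the generators of L^## and of L^• lie in L^#, and by (c)
   (bar x being in κG^#) the generators of L^# lie in L^## + L^•.
   Characteristic 0 is used only through 2 ≠ 0.

   An ideal of κG^# is the
   least set closed under 0, +, equality in A_G and multiplication by κG^#
   that contains its generators (inIdeal_least); since such ideals and sums
   of such ideals again have these closure properties, both inclusions reduce
   to the generator identities above. *)

Set Implicit Arguments.
Unset Strict Implicit.
Unset Printing Implicit Defensive.
Import GRing.Theory.
Local Open Scope ring_scope.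

Section GroupAlgebra.
Variables (K : fieldType) (G : groupType).
Local Notation kG := (kG K G).
Local Notation gm := (@monoid.mul G).
Local Notation gi := (@monoid.inv G).
Local Notation g1 := (@monoid.one G).
Local Notation coef := (@coef K G).
Local Notation kof := (@kG_of K G).
Local Notation keq := (@kG_eq K G).
Local Notation aeq := (@AG_eq K G).
Implicit Types (x y z r v : kG) (c : K) (g h l : G).

Lemma coef_nil g : coef [::] g = 0.
Proof. by rewrite /Defs.coef big_nil. Qed.

Lemma coef_cons p x g :
  coef (p :: x) g = (if p.2 == g then p.1 else 0) + coef x g.
Proof. by rewrite /Defs.coef big_cons; case: ifP; rewrite ?add0r. Qed.

Lemma coef_add x y g : coef (kG_add x y) g = coef x g + coef y g.
Proof. by rewrite /Defs.coef /kG_add big_cat. Qed.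

Lemma coef_scale c x g : coef (kG_scale c x) g = c * coef x g.
Proof.
elim: x => [|p x IH]; first by rewrite /kG_scale /= !coef_nil mulr0.
rewrite /kG_scale /= !coef_cons -/(kG_scale c x) IH mulrDr /=.
by case: ifP; rewrite ?mulr0.
Qed.

Lemma coef_sub x y g : coef (kG_sub x y) g = coef x g - coef y g.
Proof. by rewrite /kG_sub coef_add coef_scale mulN1r. Qed.

Lemma coef_star x g : coef (kG_star x) g = coef x (gi g).
Proof.
elim: x => [|p x IH]; first by rewrite /kG_star /= !coef_nil.
rewrite /kG_star /= !coef_cons -/(kG_star x) IH /=.
by rewrite -(inj_eq (@monoid.invg_inj G)) monoid.invgK.
Qed.

Lemma coef_of h g : coef (kof h) g = if h == g then 1 else 0.
Proof. by rewrite /kG_of coef_cons coef_nil addr0. Qed.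

Lemma coef_mulL x y g :
  coef (kG_mul x y) g = \sum_(p <- x) p.1 * coef y (gm (gi p.2) g).
Proof.
rewrite /Defs.coef /kG_mul big_mkcond big_allpairs_dep /=.
apply: eq_bigr => p _; rewrite [in RHS]big_mkcond mulr_sumr.
apply: eq_bigr => q _.
have -> : (gm p.2 q.2 == g) = (q.2 == gm (gi p.2) g).
  by apply/eqP/eqP => [<-|->]; rewrite ?monoid.mulKg ?monoid.mulVKg.
by case: ifP; rewrite ?mulr0.
Qed.

Lemma coef_mulR x y g :
  coef (kG_mul x y) g = \sum_(q <- y) q.1 * coef x (gm g (gi q.2)).
Proof.
rewrite /Defs.coef /kG_mul big_mkcond big_allpairs_dep /= exchange_big.
apply: eq_bigr => q _; rewrite [in RHS]big_mkcond mulr_sumr.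
apply: eq_bigr => p _.
have -> : (gm p.2 q.2 == g) = (p.2 == gm g (gi q.2)).
  by apply/eqP/eqP => [<-|->]; rewrite ?monoid.mulgK ?monoid.mulgVK.
by case: ifP; rewrite ?mulr0 // mulrC.
Qed.

Lemma coef_mulof x h g : coef (kG_mul x (kof h)) g = coef x (gm g (gi h)).
Proof. by rewrite coef_mulR /kG_of big_cons big_nil addr0 mul1r. Qed.

Lemma coef_ofmul x h g : coef (kG_mul (kof h) x) g = coef x (gm (gi h) g).
Proof. by rewrite coef_mulL /kG_of big_cons big_nil addr0 mul1r. Qed.

Lemma coef_mul_addr z x y g :
  coef (kG_mul z (kG_add x y)) g = coef (kG_mul z x) g + coef (kG_mul z y) g.
Proof. by rewrite !coef_mulR big_cat. Qed.

Lemma coef_mul_addl z x y g :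
  coef (kG_mul (kG_add x y) z) g = coef (kG_mul x z) g + coef (kG_mul y z) g.
Proof. by rewrite !coef_mulL big_cat. Qed.

Lemma coef_mul_scaler c z x g :
  coef (kG_mul z (kG_scale c x)) g = c * coef (kG_mul z x) g.
Proof.
rewrite !coef_mulL mulr_sumr; apply: eq_bigr => p _.
by rewrite coef_scale mulrCA.
Qed.

Lemma coef_mul_scalel c z x g :
  coef (kG_mul (kG_scale c z) x) g = c * coef (kG_mul z x) g.
Proof.
rewrite !coef_mulR mulr_sumr; apply: eq_bigr => q _.
by rewrite coef_scale mulrCA.
Qed.

Lemma coef_mul_subr z x y g :
  coef (kG_mul z (kG_sub x y)) g = coef (kG_mul z x) g - coef (kG_mul z y) g.
Proof. by rewrite /kG_sub coef_mul_addr coef_mul_scaler mulN1r. Qed.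

Lemma coef_mul_subl z x y g :
  coef (kG_mul (kG_sub x y) z) g = coef (kG_mul x z) g - coef (kG_mul y z) g.
Proof. by rewrite /kG_sub coef_mul_addl coef_mul_scalel mulN1r. Qed.

Lemma keq_sym x y : keq x y -> keq y x.
Proof. by move=> E g; rewrite E. Qed.

Lemma mul_eq x x' y y' : keq x x' -> keq y y' -> keq (kG_mul x y) (kG_mul x' y').
Proof.
move=> Ex Ey g; rewrite coef_mulR.
under eq_bigr => q _ do rewrite Ex.
rewrite -coef_mulR !coef_mulL; apply: eq_bigr => p _; by rewrite Ey.
Qed.

Lemma mul_assoc x y z : keq (kG_mul (kG_mul x y) z) (kG_mul x (kG_mul y z)).
Proof.
move=> g; rewrite coef_mulR [in RHS]coef_mulR /kG_mul big_allpairs_dep /=.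
rewrite exchange_big /=; apply: eq_bigr => q _.
rewrite -/(kG_mul x y) coef_mulR mulr_sumr; apply: eq_bigr => p _ /=.
by rewrite monoid.invgM monoid.mulgA mulrCA mulrA.
Qed.

Lemma mul_nilr z : keq (kG_mul z [::]) [::].
Proof. by move=> g; rewrite coef_mulR big_nil coef_nil. Qed.

Lemma mul_addr z x y :
  keq (kG_mul z (kG_add x y)) (kG_add (kG_mul z x) (kG_mul z y)).
Proof. by move=> g; rewrite coef_add coef_mul_addr. Qed.

Lemma mul_addl z x y :
  keq (kG_mul (kG_add x y) z) (kG_add (kG_mul x z) (kG_mul y z)).
Proof. by move=> g; rewrite coef_add coef_mul_addl. Qed.

Lemma scale_mull c z x : keq (kG_mul (kG_scale c z) x) (kG_scale c (kG_mul z x)).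
Proof. by move=> g; rewrite coef_scale coef_mul_scalel. Qed.

Lemma mul1 x : keq (kG_mul (kof g1) x) x.
Proof. by move=> g; rewrite coef_ofmul monoid.invg1 monoid.mul1g. Qed.

Lemma star_mul x y : keq (kG_star (kG_mul x y)) (kG_mul (kG_star y) (kG_star x)).
Proof.
move=> g; rewrite coef_star coef_mulR [in RHS]coef_mulL /kG_star big_map.
apply: eq_bigr => q _ /=; rewrite -/(kG_star x) coef_star.
by rewrite monoid.invgM monoid.invgK.
Qed.

Lemma inI_scale c x : inI x -> inI (kG_scale c x).
Proof.
elim=> [a b c0 d Hb||x1 y1 _ H1 _ H2|x1 y1 E _ IH].
- apply: inI_eq (scale_mull _ _ _) _; exact: inI_gen.
- exact: inI_zero.
- by rewrite /kG_scale /kG_add map_cat; exact: inI_add.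
- by apply: inI_eq IH => g; rewrite !coef_scale E.
Qed.

Lemma inI_mull z x : inI x -> inI (kG_mul z x).
Proof.
elim=> [a b c0 d Hb||x1 y1 _ H1 _ H2|x1 y1 E _ IH].
- apply: inI_eq (mul_assoc _ _ _) _; exact: inI_gen.
- apply: inI_eq (keq_sym (mul_nilr z)) _; exact: inI_zero.
- apply: inI_eq (keq_sym (mul_addr _ _ _)) _; exact: inI_add.
- by apply: inI_eq IH; apply: mul_eq.
Qed.

Lemma inI_mulr z x : inI x -> inI (kG_mul x z).
Proof.
elim=> [a b c0 d Hb||x1 y1 _ H1 _ H2|x1 y1 E _ IH].
- apply: inI_eq (keq_sym (mul_assoc _ _ _)) _.
  apply: inI_eq (mul_eq (fun _ => erefl) (keq_sym (mul_assoc _ _ _))) _.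
  exact: inI_gen.
- exact: inI_zero.
- apply: inI_eq (keq_sym (mul_addl _ _ _)) _; exact: inI_add.
- by apply: inI_eq IH; apply: mul_eq.
Qed.

Lemma AG_keq x y : keq x y -> aeq x y.
Proof.
move=> E; apply: inI_eq (@inI_zero K G) => g.
by rewrite coef_nil coef_sub E subrr.
Qed.

Lemma AG_sym x y : aeq x y -> aeq y x.
Proof.
move=> E; apply: inI_eq (inI_scale (-1) E) => g.
by rewrite coef_scale !coef_sub; ring.
Qed.

Lemma AG_trans x y z : aeq x y -> aeq y z -> aeq x z.
Proof.
move=> E1 E2; apply: inI_eq (inI_add E1 E2) => g.
by rewrite coef_add !coef_sub; ring.
Qed.

Lemma AG_add x x' y y' : aeq x x' -> aeq y y' -> aeq (kG_add x y) (kG_add x' y').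
Proof.
move=> E1 E2; apply: inI_eq (inI_add E1 E2) => g.
by rewrite !(coef_add, coef_sub); ring.
Qed.

Lemma AG_scale c x y : aeq x y -> aeq (kG_scale c x) (kG_scale c y).
Proof.
move=> E; apply: inI_eq (inI_scale c E) => g.
by rewrite !(coef_scale, coef_sub); ring.
Qed.

Lemma AG_mull z x y : aeq x y -> aeq (kG_mul z x) (kG_mul z y).
Proof.
move=> E; apply: inI_eq (inI_mull z E) => g.
by rewrite coef_sub coef_mul_subr.
Qed.

Lemma AG_mulr z x y : aeq x y -> aeq (kG_mul x z) (kG_mul y z).
Proof.
move=> E; apply: inI_eq (inI_mulr z E) => g.
by rewrite coef_sub coef_mul_subl.
Qed.

Lemma AG_comm a b : kG_selfadj b -> aeq (kG_mul a b) (kG_mul b a).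
Proof.
move=> Hb; apply: inI_eq (inI_gen a (kof g1) (kof g1) Hb) => g.
by rewrite coef_ofmul coef_mulof monoid.invg1 monoid.mul1g monoid.mulg1.
Qed.

Lemma selfadj_bar x : kG_selfadj (bar x).
Proof.
move=> g; rewrite coef_star !(coef_scale, coef_add, coef_star).
by rewrite monoid.invgK addrC.
Qed.

Lemma sharp_scale c r : sharp r -> sharp (kG_scale c r).
Proof.
move=> Hr; apply: AG_trans (AG_scale c Hr).
by apply: AG_keq => g; rewrite !(coef_star, coef_scale).
Qed.

Lemma sharp_one : sharp (kof g1).
Proof.
apply: AG_keq => g; rewrite coef_star !coef_of.
by rewrite -monoid.eqg_invLR monoid.invg1.
Qed.

(* κG^# · (self-adjoint) ⊆ κG^#, since a self-adjoint element is central. *)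
Lemma sharp_mul_selfadj r v : sharp r -> kG_selfadj v -> sharp (kG_mul r v).
Proof.
move=> Hr Hv; apply: AG_trans (AG_keq (star_mul _ _)) _.
apply: AG_trans (AG_keq (mul_eq Hv (fun _ => erefl))) _.
apply: AG_trans (AG_mull _ Hr) _.
apply: AG_sym; exact: AG_comm.
Qed.

(* An ideal of κG^#, viewed as a set of representatives in κG. *)
Definition sharp_ideal (P : kG -> Prop) : Prop :=
  [/\ P (kG0 K G),
      forall x y, P x -> P y -> P (kG_add x y),
      forall x y, aeq x y -> P x -> P y &
      forall r x, sharp r -> P x -> P (kG_mul r x)].

Lemma inIdeal_least (S P : kG -> Prop) :
  sharp_ideal P -> (forall s, S s -> P s) -> forall y, inIdeal S y -> P y.
Proof.
case=> P0 Padd Peq Pmul PS y.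
elim=> [|r s Hr Hs|x1 y1 _ H1 _ H2|x1 y1 E _ H].
- exact: P0.
- exact: Pmul Hr (PS s Hs).
- exact: Padd H1 H2.
- exact: Peq E H.
Qed.

Lemma inIdeal_gen_mem (S : kG -> Prop) s : S s -> inIdeal S s.
Proof.
move=> Hs; apply: inIdeal_eq (inIdeal_gen sharp_one Hs).
exact: AG_keq (mul1 s).
Qed.

Section HalfInvertible.
Hypothesis two_neq0 : (2%:R : K) != 0.

Lemma AG_bar r : sharp r -> aeq r (bar r).
Proof.
move=> Hr; apply: inI_eq (inI_scale (- (2%:R)^-1) Hr) => g.
rewrite !(coef_scale, coef_sub, coef_add, coef_star); by field.
Qed.

(* Closure under κG^#: the product of r with r' s is (r · bar r') s. *)
Lemma inIdeal_is_ideal (S : kG -> Prop) : sharp_ideal (inIdeal S).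
Proof.
split; [exact: inIdeal_zero|exact: inIdeal_add|exact: inIdeal_eq|].
move=> r x Hr; elim=> [|r' s Hr' Hs|x1 y1 _ H1 _ H2|x1 y1 E _ H].
- apply: inIdeal_eq (inIdeal_zero S); exact: AG_keq (keq_sym (mul_nilr r)).
- apply: inIdeal_eq (inIdeal_gen (sharp_mul_selfadj Hr (selfadj_bar r')) Hs).
  apply: AG_trans (AG_keq (mul_assoc _ _ _)).
  exact: AG_mulr (AG_mull r (AG_sym (AG_bar Hr'))).
- apply: inIdeal_eq (inIdeal_add H1 H2); exact: AG_keq (keq_sym (mul_addr _ _ _)).
- exact: inIdeal_eq (AG_mull r E) H.
Qed.

Lemma inIdeal_mono (S T : kG -> Prop) :
  (forall s, S s -> inIdeal T s) -> forall y, inIdeal S y -> inIdeal T y.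
Proof. exact: inIdeal_least (inIdeal_is_ideal T). Qed.

Lemma inIdealSum_is_ideal (I J : kG -> Prop) :
  sharp_ideal I -> sharp_ideal J -> sharp_ideal (inIdealSum I J).
Proof.
case=> I0 Iadd _ Imul [J0 Jadd _ Jmul]; split.
- by exists (kG0 K G), (kG0 K G); split=> //; split=> //; exact: AG_keq.
- move=> x y [a1 [b1 [Ha1 [Hb1 E1]]]] [a2 [b2 [Ha2 [Hb2 E2]]]].
  exists (kG_add a1 a2), (kG_add b1 b2); split; first exact: Iadd.
  split; first exact: Jadd.
  apply: AG_trans (AG_add E1 E2) _; apply: AG_keq => g.
  by rewrite !coef_add; ring.
- move=> x y Exy [a [b [Ha [Hb E]]]].
  by exists a, b; split=> //; split=> //; apply: AG_trans (AG_sym Exy) E.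
- move=> r x Hr [a [b [Ha [Hb E]]]].
  exists (kG_mul r a), (kG_mul r b); split; first exact: Imul.
  split; first exact: Jmul.
  apply: AG_trans (AG_mull r E) _; exact: AG_keq (mul_addr _ _ _).
Qed.

Definition sharp_gen x l := kG_sub (bar (kG_mul x (kof l))) (bar x).
Definition sharpsharp_gen x l :=
  kG_sub (bar (kG_mul x (kof l))) (bar (kG_mul x (kof (gi l)))).
Definition bullet_gen l := kG_sub (kof g1) (bar (kof l)).

Ltac expand_coefs := rewrite /sharp_gen /sharpsharp_gen /bullet_gen /bar;
  rewrite ?(coef_sub, coef_add, coef_scale, coef_star, coef_mul_subr,
    coef_mul_subl, coef_mul_addr, coef_mul_addl, coef_mul_scaler,
    coef_mul_scalel, coef_mulof, coef_ofmul);
  rewrite ?(monoid.invgM, monoid.invgK, monoid.invg1, monoid.mulgA);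
  rewrite ?(monoid.mulgK, monoid.mulgVK, monoid.mulVg, monoid.mulgV,
    monoid.mul1g, monoid.mulg1).

Lemma sharpsharp_gen_split x l :
  keq (sharpsharp_gen x l)
      (kG_add (sharp_gen x l) (sharp_gen (kG_mul x (kof (gi l))) l)).
Proof. by move=> g; expand_coefs; ring. Qed.

Lemma bullet_gen_eq l :
  keq (bullet_gen l) (kG_mul (kG_scale (-1) (kof g1)) (sharp_gen (kof g1) l)).
Proof.
have shift h k : coef (kof g1) (gm h (gi k)) = coef (kof k) h.
  rewrite !coef_of; congr (if _ then _ else _).
  apply/eqP/eqP => E; last by rewrite -E monoid.mulgV.
  by rewrite -[h](monoid.mulgVK k) -E monoid.mul1g.
have inv1 h : coef (kof g1) (gi h) = coef (kof g1) h.
  by rewrite !coef_of -monoid.eqg_invLR monoid.invg1.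
move=> g; expand_coefs; rewrite !shift inv1; by field.
Qed.

(* Identity (c): modulo I, an L^#-generator is ½ times an L^##-generator plus
   a κG^#-multiple of an L^•-generator; the error term is ¼ [m, x*] with the
   self-adjoint m = l + l⁻¹. *)
Lemma sharp_gen_decomp x l :
  aeq (sharp_gen x l)
      (kG_add (kG_mul (kG_scale (2%:R)^-1 (kof g1)) (sharpsharp_gen x l))
              (kG_mul (kG_scale (-1) (bar x)) (bullet_gen l))).
Proof.
set m := kG_add (kof l) (kof (gi l)).
have m_selfadj : kG_selfadj m.
  move=> g; rewrite /m !(coef_star, coef_add, coef_of) addrC.
  by rewrite monoid.eqg_inv -monoid.eqg_invLR.
have := inI_scale (- ((2%:R)^-1 * (2%:R)^-1))
  (inI_gen (kG_star x) (kof g1) (kof g1) m_selfadj).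
apply: inI_eq => g; rewrite /m; expand_coefs; by field.
Qed.

Variable L : G -> Prop.

Lemma Lsharpsharp_sub_Lsharp y : Lsharpsharp L y -> Lsharp L y.
Proof.
apply: inIdeal_mono => _ [x [l [Ll ->]]].
apply: inIdeal_eq (AG_keq (keq_sym (sharpsharp_gen_split x l))) _.
apply: inIdeal_add; apply: inIdeal_gen_mem; first by exists x, l.
by exists (kG_mul x (kof (gi l))), l.
Qed.

Lemma Lbullet_sub_Lsharp y : Lbullet L y -> Lsharp L y.
Proof.
apply: inIdeal_mono => _ [l [Ll ->]].
apply: inIdeal_eq (AG_keq (keq_sym (bullet_gen_eq l))) _.
apply: inIdeal_gen; first exact: sharp_scale sharp_one.
by exists (kof g1), l.
Qed.

Lemma Lsharp_sub_sum y : Lsharp L y -> inIdealSum (Lsharpsharp L) (Lbullet L) y.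
Proof.
apply: inIdeal_least.
  exact: inIdealSum_is_ideal (inIdeal_is_ideal _) (inIdeal_is_ideal _).
move=> _ [x [l [Ll ->]]].
exists (kG_mul (kG_scale (2%:R)^-1 (kof g1)) (sharpsharp_gen x l)),
       (kG_mul (kG_scale (-1) (bar x)) (bullet_gen l)).
split; first by apply: inIdeal_gen; [exact: sharp_scale sharp_one | exists x, l].
split; last exact: sharp_gen_decomp.
apply: inIdeal_gen; last by exists l.
exact: sharp_scale (AG_keq (selfadj_bar x)).
Qed.
End HalfInvertible.
End GroupAlgebra.

Theorem mainTheorem5 (K : fieldType) (G : groupType)
    (charK0 : [pchar K]%R =i pred0) (L : G -> Prop) :
  forall y : kG K G,
    Lsharp L y <-> inIdealSum (Lsharpsharp L) (Lbullet L) y.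
Proof.
have two_neq0 : (2%:R : K) != 0 by rewrite ((GRing.pcharf0P K).1 charK0 2).
move=> y; split; first exact: Lsharp_sub_sum.
case=> [a [b [Ha [Hb E]]]].
apply: inIdeal_eq (AG_sym E) _.
exact: inIdeal_add (Lsharpsharp_sub_Lsharp two_neq0 Ha)
                   (Lbullet_sub_Lsharp two_neq0 Hb).
Qed.
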